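(* Let $(G,\mathcal{T},(A^\circ,B^\circ),k)$ be a maximal Terminal Separation instance. If $A$ is a terminal-free $A^\circ$-extension with $d(A)-d(A^\circ)=1$, then there exists an integral terminal separation $(A^\ast,B^\ast)$ extending $(A^\circ,B^\circ)$ that has minimum cost among all integral terminal separations extending $(A^\circ,B^\circ)$, such that $A\setminus A^\circ\subseteq A^\ast$ or $A\setminus A^\circ\subseteq B^\ast$.
   Context: Graphs may have multiple edges but no loops; $d(A)$ is the number of edges with exactly one endpoint in $A$. For a family $\mathcal{T}$ of pairwise disjoint vertex pairs (terminals are their vertices), a terminal separation is a pair $(A,B)$ of disjoint vertex sets such that each pair in $\mathcal{T}$ either has one vertex in $A$ and one in $B$ or is disjoint from $A\cup B$; it is integral if $A\cup B=V(G)$; $(A',B')$ extends $(A,B)$ if $A\subseteq A'$, $B\subseteq B'$; cost $c(A,B)=(d(A)+d(B))/2$; $(A,B)$ is maximal if every other terminal separation extending it has strictly larger cost. A Terminal Separation instance $(G,\mathcal{T},(A^\circ,B^\circ),k)$ has every terminal of degree at most one and $(A^\circ,B^\circ)$ a terminal separation; it is maximal if $(A^\circ,B^\circ)$ is maximal. A set $A$ is an $A^\circ$-extension if $A^\circ\subseteq A\subseteq V(G)\setminus B^\circ$; it is terminal-free if $A\setminus A^\circ$ contains no terminal. *)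

From mathcomp Require Import all_boot all_order all_algebra.
Set Implicit Arguments. Unset Strict Implicit. Unset Printing Implicit Defensive.
Import GRing.Theory Num.Theory.

(* A multigraph without loops: vertex type V, edge type E (so parallel edges
   are allowed), each edge e having endpoints (ends e).1 and (ends e).2. *)
Definition loopless (V E : finType) (ends : E -> V * V) : Prop :=
  forall e, (ends e).1 != (ends e).2.

Definition dcut (V E : finType) (ends : E -> V * V) (A : {set V}) : nat :=
  #|[set e : E | ((ends e).1 \in A) != ((ends e).2 \in A)]|.

Definition degree (V E : finType) (ends : E -> V * V) (v : V) : nat :=
  #|[set e : E | ((ends e).1 == v) || ((ends e).2 == v)]|.

Definition pair_family (V : finType) (T : {set {set V}}) : Prop :=
  (forall P, P \in T -> #|P| = 2) /\ trivIset T.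

Definition terminals (V : finType) (T : {set {set V}}) : {set V} := cover T.

Definition terminal_separation (V : finType) (T : {set {set V}})
    (A B : {set V}) : Prop :=
  [disjoint A & B] /\
  forall P, P \in T ->
    (#|P :&: A| = 1 /\ #|P :&: B| = 1) \/ [disjoint P & A :|: B].

Definition integral (V : finType) (A B : {set V}) : Prop :=
  A :|: B = [set: V].

Definition extends (V : finType) (A B A' B' : {set V}) : Prop :=
  A \subset A' /\ B \subset B'.

Definition cost (V E : finType) (ends : E -> V * V) (A B : {set V}) : rat :=
  ((dcut ends A + dcut ends B)%:R / 2%:R)%R.

Definition maximal_sep (V E : finType) (ends : E -> V * V)
    (T : {set {set V}}) (A B : {set V}) : Prop :=
  forall A' B', terminal_separation T A' B' -> extends A B A' B' ->
    (A', B') <> (A, B) -> (cost ends A B < cost ends A' B')%R.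

Definition TS_instance (V E : finType) (ends : E -> V * V)
    (T : {set {set V}}) (A0 B0 : {set V}) (k : nat) : Prop :=
  loopless ends /\ pair_family T /\
  (forall v, v \in terminals T -> degree ends v <= 1) /\
  terminal_separation T A0 B0.

Definition maximal_TS_instance (V E : finType) (ends : E -> V * V)
    (T : {set {set V}}) (A0 B0 : {set V}) (k : nat) : Prop :=
  TS_instance ends T A0 B0 k /\ maximal_sep ends T A0 B0.

Definition extension (V : finType) (A0 B0 A : {set V}) : Prop :=
  A0 \subset A /\ A \subset ~: B0.

Definition terminal_free (V : finType) (T : {set {set V}}) (A0 A : {set V}) : Prop :=
  [disjoint A :\: A0 & terminals T].

From mathcomp Require Import all_boot all_order all_algebra.
From mathcomp Require Import zify.
From Stdlib Require Import Classical.
Import Order.TTheory GRing.Theory Num.Theory.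

(* Start from an optimal integral extension (As, ~: As) of (A0, B0).  If
   As :&: A = A0, the vertices of A :\: A0 all lie on the B-side.  Otherwise
   As :&: A strictly extends A0 by non-terminals only, so it is still the
   A-side of a terminal separation with B0, and maximality of (A0, B0) gives
   d(As :&: A) > d(A0), i.e. d(As :&: A) >= d(A).  Submodularity of d then
   yields d(As :|: A) <= d(As), so moving A to the A-side keeps an optimal
   integral extension. *)

Set Implicit Arguments.
Unset Strict Implicit.
Unset Printing Implicit Defensive.

Section Cuts.

Variables (V E : finType) (ends : E -> V * V).

Lemma dcut_sum (A : {set V}) :
  dcut ends A = \sum_e (((ends e).1 \in A) != ((ends e).2 \in A) : nat).
Proof. by rewrite /dcut -sum1_card big_mkcond; apply: eq_bigr => e _; rewrite inE. Qed.

Lemma dcutC (A : {set V}) : dcut ends (~: A) = dcut ends A.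
Proof.
rewrite !dcut_sum; apply: eq_bigr => e _; rewrite !inE.
by case: ((ends e).1 \in A); case: ((ends e).2 \in A).
Qed.

Lemma dcut_submod (A B : {set V}) :
  dcut ends (A :|: B) + dcut ends (A :&: B) <= dcut ends A + dcut ends B.
Proof.
rewrite !dcut_sum -!big_split /=; apply: leq_sum => e _; rewrite !inE.
by case: ((ends e).1 \in A); case: ((ends e).2 \in A);
   case: ((ends e).1 \in B); case: ((ends e).2 \in B).
Qed.

Lemma cost_le (A B A' B' : {set V}) :
  (cost ends A B <= cost ends A' B')%R =
  (dcut ends A + dcut ends B <= dcut ends A' + dcut ends B').
Proof. by rewrite /cost ler_pM2r ?invr_gt0 ?ltr0n // ler_nat. Qed.

Lemma cost_lt (A B A' B' : {set V}) :
  (cost ends A B < cost ends A' B')%R =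
  (dcut ends A + dcut ends B < dcut ends A' + dcut ends B').
Proof. by rewrite /cost ltr_pM2r ?invr_gt0 ?ltr0n // ltr_nat. Qed.

End Cuts.

Lemma exists_minimizer (X : Type) (P : X -> Prop) (f : X -> nat) :
  (exists x, P x) -> exists2 x, P x & forall y, P y -> f x <= f y.
Proof.
move=> [x Px]; have [n fx] : exists n, f x = n by exists (f x).
elim/ltn_ind: n x fx Px => n IH x fx Px.
have [[y Py lt_yx] | no_smaller] := classic (exists2 y, P y & f y < f x).
  by apply: (IH (f y) _ y); rewrite -?fx.
exists x => // y Py; rewrite leqNgt; apply/negP => lt_yx.
by apply: no_smaller; exists y.
Qed.

Section Separations.

Variables (V : finType) (T : {set {set V}}).

Lemma integral_setC (A B : {set V}) :
  [disjoint A & B] -> integral A B -> B = ~: A.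
Proof.
move=> AB /setP AUB; apply/setP => x; rewrite inE.
have := AUB x; rewrite !inE; case: (boolP (x \in A)) => [xA _ | _ /= ->//].
exact: disjointFr AB xA.
Qed.

Lemma terminal_separationU (A B X : {set V}) :
  terminal_separation T A B -> [disjoint X :\: A & terminals T] ->
  terminal_separation T (A :|: X) (B :\: X).
Proof.
move=> [AB sepAB] freeX.
have PX_A P x : P \in T -> x \in P -> x \in X -> x \in A.
  move=> PT xP xX; apply/negPn/negP => xNA.
  have xT : x \in terminals T by apply/bigcupP; exists P.
  by have := disjointFl freeX xT; rewrite inE xNA xX.
have disjABX : [disjoint A :|: X & B :\: X].
  rewrite -setI_eq0 -subset0; apply/subsetP => x.
  rewrite !inE => /andP [/orP [xA | xX] /andP [xNX xB]].
    by rewrite (disjointFr AB xA) in xB.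
  by rewrite xX in xNX.
split=> // P PT.
have PA : P :&: (A :|: X) = P :&: A.
  apply/setP => x; rewrite !inE; case: (boolP (x \in P)) => //= xP.
  by case: (boolP (x \in X)) => [/(PX_A _ _ PT xP) -> | _]; rewrite ?orbF.
have PB : P :&: (B :\: X) = P :&: B.
  apply/setP => x; rewrite !inE; case: (boolP (x \in P)) => //= xP.
  case: (boolP (x \in B)) => [xB | _]; rewrite ?andbF //= andbT.
  by apply/negP => /(PX_A _ _ PT xP) xA; rewrite (disjointFr AB xA) in xB.
rewrite PA PB -setI_eq0 setIUr PA PB -setIUr setI_eq0.
exact: sepAB.
Qed.

Lemma exists_integral_extension (A0 B0 : {set V}) :
  pair_family T -> terminal_separation T A0 B0 ->
  exists A B, [/\ terminal_separation T A B, integral A B & extends A0 B0 A B].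
Proof.
move=> [card2 trivT] [AB0 sep0].
pose untouched (P : {set V}) := [disjoint P & A0 :|: B0].
pose X := [set v | [exists P in T, untouched P && ([pick u in P] == Some v)]].
have pick_in (P : {set V}) x : [pick u in P] = Some x -> x \in P.
  by case: pickP => // u uP [<-].
have XP x : x \in X -> exists2 P, P \in T & untouched P /\ [pick u in P] = Some x.
  by rewrite inE => /existsP [P /and3P [PT uP /eqP pP]]; exists P.
have XQ Q x : Q \in T -> x \in Q -> x \in X ->
    untouched Q /\ [pick u in Q] = Some x.
  move=> QT xQ /XP [P PT [uP pP]].
  have <- // : P = Q.
  by rewrite -(def_pblock trivT PT (pick_in _ _ pP)) (def_pblock trivT QT xQ).
(* Every pair untouched by (A0, B0) sends its picked vertex to the B-side. *)
pose B := B0 :|: X.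
have QB1 Q : Q \in T -> #|Q :&: B| = 1.
  move=> QT; case: (boolP (untouched Q)) => uQ.
  - have [x pQ] : exists x, [pick u in Q] = Some x.
      case: pickP => [x _ | Q0]; first by exists x.
      by have := card2 Q QT; rewrite (eq_card0 Q0).
    suff -> : Q :&: B = [set x] by rewrite cards1.
    apply/setP => y; rewrite in_setI in_setU in_set1.
    apply/idP/eqP => [/andP [yQ /orP [yB0 | yX]] | ->].
    + by have := disjointFr uQ yQ; rewrite inE yB0 orbT.
    + by have [_] := XQ Q y QT yQ yX; rewrite pQ => -[].
    + rewrite pick_in //= inE; apply/orP; right.
      by apply/existsP; exists Q; rewrite QT uQ pQ eqxx.
  - have [[_ QB0] | ] := sep0 Q QT; last by move/negP: uQ.
    suff -> : Q :&: B = Q :&: B0 by [].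
    apply/setP => y; rewrite !in_setI in_setU.
    case: (boolP (y \in Q)) => //= yQ.
    case: (boolP (y \in X)) => [yX | _]; last by rewrite orbF.
    by have [uQ' _] := XQ Q y QT yQ yX; rewrite uQ' in uQ.
exists (~: B), B; split.
- split; first by rewrite disjoint_sym disjoints_subset setCK.
  move=> Q QT; left; split; last exact: QB1.
  by rewrite -setDE cardsD (card2 Q QT) QB1.
- by rewrite /integral setUC setUCr.
- split; last exact: subsetUl.
  apply/subsetP => x xA0; rewrite in_setC in_setU negb_or (disjointFr AB0 xA0) /=.
  apply/negP => /XP [P PT [uP pP]].
  by have := disjointFr uP (pick_in _ _ pP); rewrite inE xA0.
Qed.

End Separations.

Lemma maximal_sep_dcut_setU (V E : finType) (ends : E -> V * V)
    (T : {set {set V}}) (A0 B0 A As : {set V}) :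
  terminal_separation T A0 B0 -> maximal_sep ends T A0 B0 ->
  extension A0 B0 A -> terminal_free T A0 A ->
  dcut ends A = (dcut ends A0).+1 ->
  A0 \subset As -> As :&: A != A0 ->
  dcut ends (As :|: A) <= dcut ends As.
Proof.
move=> sep0 max0 [A0A AB0] freeA dA A0As AsA_neq.
have A0_AsA : A0 \subset As :&: A by rewrite subsetI A0As.
have AsA_B0 : [disjoint B0 & As :&: A].
  by rewrite disjoint_sym disjoints_subset (subset_trans (subsetIr _ _) AB0).
have freeAsA : [disjoint As :&: A :\: A0 & terminals T].
  exact: disjointWl (setSD _ (subsetIr _ _)) freeA.
have := terminal_separationU sep0 freeAsA.
rewrite (setUidPr A0_AsA) (setDidPl AsA_B0) => sepAsA.
have : (cost ends A0 B0 < cost ends (As :&: A) B0)%R.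
  by apply: max0 => // -[AsA_eq]; rewrite AsA_eq eqxx in AsA_neq.
rewrite cost_lt ltn_add2r => lt_A0_AsA.
have := dcut_submod ends As A; lia.
Qed.

Theorem lemma4p3 (V E : finType) (ends : E -> V * V) (T : {set {set V}})
    (A0 B0 : {set V}) (k : nat) (A : {set V}) :
  maximal_TS_instance ends T A0 B0 k ->
  extension A0 B0 A -> terminal_free T A0 A ->
  dcut ends A = (dcut ends A0).+1 ->
  exists As Bs : {set V},
    [/\ terminal_separation T As Bs, integral As Bs, extends A0 B0 As Bs,
        (forall A' B', terminal_separation T A' B' -> integral A' B' ->
           extends A0 B0 A' B' -> (cost ends As Bs <= cost ends A' B')%R)
      & (A :\: A0 \subset As) \/ (A :\: A0 \subset Bs)].
Proof.
move=> [[_ [pairT [_ sep0]]] max0] [A0A AB0] freeA dA.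
have [A1 [B1 ext1]] := exists_integral_extension pairT sep0.
have [[As Bs] /= [sepS intS [A0As B0Bs]] minS] := exists_minimizer
  (P := fun p => [/\ terminal_separation T p.1 p.2, integral p.1 p.2 & extends A0 B0 p.1 p.2])
  (fun p => dcut ends p.1 + dcut ends p.2) (ex_intro _ (A1, B1) ext1).
have optS A' B' : terminal_separation T A' B' -> integral A' B' ->
    extends A0 B0 A' B' -> (dcut ends As + dcut ends Bs <= dcut ends A' + dcut ends B').
  by move=> *; exact: (minS (A', B')).
have BsC := integral_setC sepS.1 intS; clear minS.
rewrite {}BsC in B0Bs sepS intS optS.
have [AsA_eq | AsA_neq] := eqVneq (As :&: A) A0.
  exists As, (~: As); split=> //; first by move=> *; rewrite cost_le optS.
  right; apply/subsetP => x; rewrite !inE => /andP [xNA0 xA].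
  by apply: contra xNA0 => xAs; rewrite -AsA_eq inE xAs.
have le_AsA := maximal_sep_dcut_setU sep0 max0 (conj A0A AB0) freeA dA A0As AsA_neq.
have freeA' : [disjoint A :\: As & terminals T] := disjointWl (setDS A A0As) freeA.
exists (As :|: A), (~: As :\: A); split.
- exact: terminal_separationU sepS freeA'.
- by rewrite /integral setDE -setCU setUCr.
- split; first exact: subset_trans A0As (subsetUl _ _).
  apply/subsetP => x xB0; rewrite in_setD (subsetP B0Bs) // andbT.
  by apply: contraL xB0 => /(subsetP AB0); rewrite inE.
- move=> A' B' sep' int' ext'; rewrite cost_le setDE -setCU !dcutC.
  have := optS A' B' sep' int' ext'; rewrite dcutC; lia.
- by left; exact: subset_trans (subsetDl _ _) (subsetUr _ _).
Qed.
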